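(* Let $w>2$ and let $\tilde f\in\mathbb L_w$. Write $\tilde f=\tilde f_x x+\tilde f_y y$ with $\tilde f_x,\tilde f_y\in\mathbb A$ homogeneous of degree $w-1$, and put $g=\tilde f_y+\tilde f_x$. Then $g$ is anti-palindromic, i.e. $g=(-1)^{w-1}\mathrm{anti}(g)$, if and only if the mould $M=\mathrm{ma}_{\tilde f}$ satisfies the senary relation $$\mathrm{teru}(M)^r=\bigl(\mathrm{push}\circ\mathrm{mantar}\circ\mathrm{teru}\circ\mathrm{mantar}\bigr)(M)^r$$ for all $1\leqslant r\leqslant w$.
   Context: $\mathbb A=\mathbb Q\langle x,y\rangle$ is the free associative algebra on $x,y$ graded by total degree, and $\mathbb L_w\subset\mathbb A$ is the space of homogeneous Lie polynomials of degree $w$ in $x,y$. $\mathrm{anti}:\mathbb A\to\mathbb A$ is the linear map reversing each word: $\mathrm{anti}(a_1a_2\cdots a_n)=a_n\cdots a_2a_1$ for letters $a_i\in\{x,y\}$. Moulds. A mould is a sequence $M=(M^m)_{m\geqslant 0}$ with $M^0\in\mathbb Q$ and $M^m=M^m(x_1,\dots,x_m)\in\mathbb Q[x_1,\dots,x_m]$; $M^m(u_1,\dots,u_m)$ denotes substitution $x_i\mapsto u_i$. For $m\geqslant1$: $\mathrm{teru}(M)^1=M^1$, and for $m\geqslant2$, $\mathrm{teru}(M)^m(u_1,\dots,u_m)=M^m(u_1,\dots,u_m)+\frac{1}{u_m}\{M^{m-1}(u_1,\dots,u_{m-2},u_{m-1}+u_m)-M^{m-1}(u_1,\dots,u_{m-2},u_{m-1})\}$;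 $\mathrm{mantar}(M)^m(u_1,\dots,u_m)=(-1)^{m-1}M^m(u_m,\dots,u_1)$; $\mathrm{push}(M)^m(u_1,\dots,u_m)=M^m(-u_1-\cdots-u_m,u_1,\dots,u_{m-1})$ (in depth $0$: $\mathrm{teru}(M)^0=\mathrm{push}(M)^0=M^0$, $\mathrm{mantar}(M)^0=-M^0$). The mould $\mathrm{ma}_h$: for $h\in\mathbb A$ homogeneous of degree $w$, write $h=\sum_{r=0}^w\sum a_{e_0,\dots,e_r}x^{e_0}yx^{e_1}y\cdots yx^{e_r}$ (sum over $(e_0,\dots,e_r)\in\mathbb Z_{\geqslant0}^{r+1}$, $\sum e_i=w-r$). Set $\mathrm{ma}_h^0=0$, $\mathrm{ma}_h^r=0$ for $r>w$, and for $1\le r\le w$, $\mathrm{ma}_h^r(u_1,\dots,u_r)=\sum a_{e_0,\dots,e_r}z_0^{e_0}\cdots z_r^{e_r}$ evaluated at $z_0=0$, $z_j=u_1+\cdots+u_j$ (with $0^0=1$). *)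

From HB Require Import structures.
From mathcomp Require Import all_boot all_order all_algebra.
From mathcomp Require Import fraction.
From mathcomp.multinomials Require Import mpoly.
Set Implicit Arguments. Unset Strict Implicit. Unset Printing Implicit Defensive.
Import Order.TTheory GRing.Theory Num.Theory.
Local Open Scope ring_scope.

(* The free associative algebra A = Q<x,y>.                                *)
(* Words are seq bool with the letter x encoded as false and y as true.    *)
(* An element of A is represented by its coefficient function              *)
(* seq bool -> rat (word |-> coefficient).                                 *)
Definition lx : bool := false.
Definition ly : bool := true.

Definition ncpoly := seq bool -> rat.

Definition ncword (s : seq bool) : ncpoly := fun t => (t == s)%:R.

(* product a*b of a homogeneous of degree i with b homogeneous *)
Definition ncmul (i : nat) (a b : ncpoly) : ncpoly :=
  fun t => a (take i t) * b (drop i t).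

Inductive is_lie : nat -> ncpoly -> Prop :=
| lie_x : is_lie 1 (ncword [:: lx])
| lie_y : is_lie 1 (ncword [:: ly])
| lie_bracket i j a b : is_lie i a -> is_lie j b ->
    is_lie (i + j) (fun t => ncmul i a b t - ncmul j b a t)
| lie_zero n : is_lie n (fun _ => 0)
| lie_add n a b : is_lie n a -> is_lie n b -> is_lie n (fun t => a t + b t)
| lie_scale n (c : rat) a : is_lie n a -> is_lie n (fun t => c * a t)
| lie_ext n a b : is_lie n a -> (forall t, a t = b t) -> is_lie n b.

Definition anti (g : ncpoly) : ncpoly := fun t => g (rev t).

Definition part_x (f : ncpoly) : ncpoly := fun u => f (rcons u lx).
Definition part_y (f : ncpoly) : ncpoly := fun u => f (rcons u ly).

(* Moulds.  A mould with values in a field K is a family of functions     *)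
(* M m : (nat -> K) -> K, where M m u stands for M^m(u 0, ..., u (m-1))     *)
(* (only the first m entries of u are used).  Polynomial identities are   *)
(* checked by evaluating at the generic point of the rational function    *)
(* field Q(X_0, X_1, ...), see [generic] below.                            *)
Definition mould (K : fieldType) := nat -> (nat -> K) -> K.

Definition teru (K : fieldType) (M : mould K) : mould K :=
  fun m u =>
    if (m <= 1)%N then M m u
    else M m u + (u m.-1)^-1 *
           (M m.-1 (fun i => if (i == m.-2)%N then u m.-2 + u m.-1 else u i)
            - M m.-1 u).

Definition mantar (K : fieldType) (M : mould K) : mould K :=
  fun m u =>
    if (m == 0)%N then - M 0 u
    else (-1) ^+ m.-1 * M m (fun i => u (m.-1 - i)%N).

Definition push (K : fieldType) (M : mould K) : mould K :=
  fun m u =>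
    M m (fun i => if i is i'.+1 then u i' else - \sum_(k < m) u k).

(* ma_h for h homogeneous of degree w:                                     *)
(* ma_h^r(u) = sum over words x^{e0} y x^{e1} ... y x^{er} of length w of  *)
(*   coeff * z_0^{e0} ... z_r^{er},  z_j = u_1 + ... + u_j  (z_0 = 0,      *)
(*   0^0 = 1).  Each letter x occurring after exactly j letters y         *)
(*   contributes the factor z_j.                                           *)
Definition zsum (K : fieldType) (u : nat -> K) (j : nat) : K :=
  \sum_(k < j) u k.

Definition ma (K : fieldType) (w : nat) (h : ncpoly) : mould K :=
  fun r u =>
    if (r == 0)%N then 0
    else \sum_(t : w.-tuple bool | (count id t == r)%N)
           ratr (h t) *
           \prod_(i < w | tnth t i == lx) zsum u (count id (take i t)).

Definition ratfun (n : nat) := {fraction {mpoly rat[n]}}.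

Definition generic (n : nat) : nat -> ratfun n :=
  fun i => if (i < n)%N =P true is ReflectT H then @FracField.tofrac _ 'X_(Ordinal H) else 0.

From HB Require Import structures.
From mathcomp Require Import all_boot all_order all_algebra.
From mathcomp Require Import fraction.
From mathcomp.multinomials Require Import mpoly.
From mathcomp Require Import ring zify.
Set Implicit Arguments. Unset Strict Implicit. Unset Printing Implicit Defensive.
Import GRing.Theory Num.Theory.
Local Open Scope ring_scope.

(* In the coordinates z_j = u_1 + ... + u_j, ma_f^r is the polynomial summing f(s) times the
   product of the z_j over the words s with r letters y, a letter x preceded by j letters y
   contributing z_j. A Lie polynomial of degree > 1 is fixed by x -> x + c, so this polynomial
   is invariant under z -> z + c; together with anti(f) = (-1)^(w-1) f this makes ma_f
   mantar-invariant. After translating so that z_r = 0, the difference quotient in teru deletes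
   the last letter of f and leaves the polynomial of g = f_y + f_x in depth r - 1, while
   push o mantar reverses the words and leaves (-1)^(w-1) anti(g). At the generic point the
   coordinates z_j - z_r (j < r) are independent, so the senary relation in depth r holds iff
   g - (-1)^(w-1) anti(g) vanishes on all words with r - 1 letters y. *)

Section WordSums.
Variable V : nmodType.

Definition wsum n (F : seq bool -> V) : V := \sum_(t : n.-tuple bool) F t.

Lemma wsum_ext n F G : (forall s, size s = n -> F s = G s) -> wsum n F = wsum n G.
Proof. by move=> FG; apply: eq_bigr => t _; rewrite FG ?size_tuple. Qed.

Lemma wsum_nil F : wsum 0 F = F [::].
Proof. by rewrite /wsum (big_pred1 [tuple]) // => t; apply/esym/eqP/tuple0. Qed.

Lemma wsumS n F :
  wsum n.+1 F = wsum n (fun s => F (false :: s)) + wsum n (fun s => F (true :: s)).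
Proof.
rewrite /wsum (reindex (fun p : bool * n.-tuple bool => [tuple of p.1 :: p.2])) /=.
  by rewrite -(pair_big predT predT (fun b (t : n.-tuple bool) => F (b :: t))) big_bool addrC.
exists (fun t : n.+1.-tuple bool => (thead t, [tuple of behead t])).
  by case=> b t _; congr (_, _); apply: val_inj.
by move=> t _; rewrite [RHS]tuple_eta.
Qed.

Lemma wsum_cat i j F : wsum (i + j) F = wsum i (fun s => wsum j (fun t => F (s ++ t))).
Proof.
elim: i F => [|i IH] F; first by rewrite wsum_nil.
by rewrite addSn !wsumS !IH.
Qed.

Lemma wsum_rcons n F :
  wsum n.+1 F = wsum n (fun s => F (rcons s false) + F (rcons s true)).
Proof.
rewrite -addn1 wsum_cat; apply: wsum_ext => s _.
by rewrite wsumS !wsum_nil !cats1.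
Qed.

Lemma wsum_rev n F : wsum n F = wsum n (fun s => F (rev s)).
Proof.
rewrite /wsum (reindex_inj (h := fun t : n.-tuple bool => [tuple of rev t])) //.
by move=> t1 t2 /(congr1 val) /(can_inj revK) /val_inj.
Qed.

Lemma wsum_delta n s0 a : size s0 = n ->
  wsum n (fun s => if s == s0 then a else 0) = a.
Proof.
move=> s0n; rewrite /wsum (bigD1 (Tuple (introT eqP s0n))) //= eqxx big1 ?addr0 //.
by move=> t; rewrite -val_eqE /= => /negbTE ->.
Qed.

End WordSums.

Section Monomials.
Variable R : comPzRingType.

Fixpoint mon (z : nat -> R) (s : seq bool) : R :=
  match s with
  | [::] => 1
  | b :: s' => if b then mon (fun j => z j.+1) s' else z 0%N * mon z s'
  end.

Lemma mon_ext s z z' : (forall j, (j <= count id s)%N -> z j = z' j) ->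
  mon z s = mon z' s.
Proof.
elim: s z z' => [|[] s IH] z z' zz' //=.
  by apply: IH => j jle; apply: zz'.
by rewrite zz' // (IH z z') // => j jle; apply: zz'.
Qed.

Lemma mon_cat z s t :
  mon z (s ++ t) = mon z s * mon (fun j => z (count id s + j)%N) t.
Proof.
elim: s z => [|[] s IH] z /=; first by rewrite mul1r.
  by rewrite IH; congr (_ * _); apply: mon_ext => j _; rewrite addSn.
by rewrite IH mulrA.
Qed.

Lemma mon_rcons z s b :
  mon z (rcons s b) = mon z s * (if b then 1 else z (count id s)).
Proof. by rewrite -cats1 mon_cat; case: b; rewrite /= ?addn0 ?mulr1. Qed.

Lemma mon_rev z s : mon (fun j => z (count id s - j)%N) (rev s) = mon z s.
Proof.
elim: s z => [|[] s IH] z //=; rewrite rev_cons mon_rcons /=.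
  rewrite mulr1 -(IH (fun j => z j.+1)); apply: mon_ext => j.
  by rewrite count_rev add1n => /subSn ->.
by rewrite mulrC -IH count_rev add0n subnn.
Qed.

Lemma mon_opp z s :
  mon (fun j => - z j) s = (-1) ^+ (size s - count id s) * mon z s.
Proof.
elim: s z => [|[] s IH] z /=; first by rewrite mulr1.
  by rewrite IH.
by rewrite IH add0n subSn ?count_size // exprS; ring.
Qed.

Lemma mon_prod z n (s : seq bool) : size s = n ->
  \prod_(i < n | nth false s i == false) z (count id (take i s)) = mon z s.
Proof.
elim: s z n => [|b s IH] z [|n] //=; first by rewrite big_ord0.
case=> sn.
rewrite big_mkcond big_ord_recl -big_mkcond /=.
by case: b; rewrite /= -(IH _ n sn) ?mul1r.
Qed.

End Monomials.

Lemma rmorph_mon (R S : comPzRingType) (f : {rmorphism R -> S}) z s :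
  f (mon z s) = mon (fun j => f (z j)) s.
Proof.
elim: s z => [|[] s IH] z /=; first exact: rmorph1.
  exact: IH.
by rewrite rmorphM IH.
Qed.

Lemma sum_split_at (R : nmodType) (a b r : nat) (X : nat -> R) :
  \sum_(k < r.+1) (if (a == k) && (b == r - k)%N then X (k : nat) else 0)
  = if (a + b == r)%N then X a else 0.
Proof.
have [ar|ra] := leqP a r; last first.
  rewrite big1 => [|k _]; first by case: eqP => // ?; lia.
  by case: eqP => // ak; have := ltn_ord k; lia.
rewrite (bigD1 (Ordinal (ar : (a < r.+1)%N))) //= eqxx big1 ?addr0 => [|k].
  by have -> : (a + b == r)%N = (b == r - a)%N by apply/eqP/eqP; lia.
by rewrite -val_eqE /= eq_sym => /negbTE ->.
Qed.

Section ZEval.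
Variable R : comPzRingType.

Definition zeval n (cf : seq bool -> R) r (z : nat -> R) : R :=
  wsum n (fun s => if count id s == r then cf s * mon z s else 0).

Lemma zeval_ext n cf r z z' : (forall j, (j <= r)%N -> z j = z' j) ->
  zeval n cf r z = zeval n cf r z'.
Proof.
move=> zz'; apply: wsum_ext => s _; case: eqP => // sr.
by rewrite (@mon_ext _ s z z') // sr.
Qed.

Lemma eq_zeval n cf cf' r z : (forall s, size s = n -> cf s = cf' s) ->
  zeval n cf r z = zeval n cf' r z.
Proof. by move=> cfE; apply: wsum_ext => s sn; rewrite cfE. Qed.

Lemma zeval0 n r z : zeval n (fun _ => 0) r z = 0.
Proof. by rewrite /zeval /wsum big1 // => t _; rewrite mul0r if_same. Qed.

Lemma zevalD n cf1 cf2 r z :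
  zeval n (fun s => cf1 s + cf2 s) r z = zeval n cf1 r z + zeval n cf2 r z.
Proof.
rewrite /zeval /wsum -big_split; apply: eq_bigr => t _ /=.
by case: ifP => _; rewrite ?mulrDl ?addr0.
Qed.

Lemma zevalB n cf1 cf2 r z :
  zeval n (fun s => cf1 s - cf2 s) r z = zeval n cf1 r z - zeval n cf2 r z.
Proof.
rewrite /zeval /wsum -sumrB; apply: eq_bigr => t _ /=.
by case: ifP => _; rewrite ?mulrBl ?subr0.
Qed.

Lemma zevalZ n c cf r z : zeval n (fun s => c * cf s) r z = c * zeval n cf r z.
Proof.
rewrite /zeval /wsum mulr_sumr; apply: eq_bigr => t _ /=.
by case: ifP => _; rewrite ?mulrA ?mulr0.
Qed.

Lemma zeval_oppz n cf r z :
  zeval n cf r (fun j => - z j) = (-1) ^+ (n - r) * zeval n cf r z.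
Proof.
rewrite /zeval /wsum mulr_sumr; apply: eq_bigr => t _.
case: eqP => [tr|]; last by rewrite mulr0.
by rewrite mon_opp size_tuple tr mulrCA.
Qed.

Lemma zeval_revz n cf r z :
  zeval n cf r (fun j => z (r - j)%N) = zeval n (fun s => cf (rev s)) r z.
Proof.
rewrite /zeval [RHS]wsum_rev; apply: wsum_ext => s _.
rewrite count_rev revK; case: eqP => // sr.
by rewrite -[in RHS]mon_rev revK count_rev sr.
Qed.

Lemma zeval_rcons_y n cf k z : z k.+1 = 0 ->
  zeval n.+1 cf k.+1 z = zeval n (fun s => cf (rcons s true)) k z.
Proof.
move=> zk; rewrite /zeval wsum_rcons; apply: wsum_ext => s _.
rewrite !mon_rcons -!cats1 !count_cat /= mulr1 !addn0 addn1 eqSS.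
by case: (count id s =P k.+1) => [->|_]; rewrite ?zk ?mulr0 add0r.
Qed.

Lemma zeval_rcons_x n cf k z :
  zeval n.+1 cf k (fun j => if j == k then 0 else z j) - zeval n.+1 cf k z
  = - z k * zeval n (fun s => cf (rcons s false)) k z.
Proof.
rewrite -zevalZ /zeval !wsum_rcons /wsum -sumrB; apply: eq_bigr => t _.
rewrite !mon_rcons -!cats1 !count_cat /= !addn0 !mulr1.
have [tk|tk] := eqVneq (count id t) k.
  by rewrite tk gtn_eqF ?addn1 //; ring.
rewrite !add0r; case: eqP => [tk'|]; last by rewrite subrr.
rewrite (@mon_ext _ t (fun j => if j == k then 0 else z j) z) ?subrr // => j.
by case: eqP => // -> kt; move: kt; rewrite -tk' addn1 ltnn.
Qed.

Lemma zeval_cat i j ca cb r z :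
  zeval (i + j) (fun s => ca (take i s) * cb (drop i s)) r z
  = \sum_(k < r.+1) zeval i ca k z * zeval j cb (r - k)%N (fun l => z (k + l)%N).
Proof.
pose X s t (k : nat) := ca s * cb t * (mon z s * mon (fun l => z (k + l)%N) t).
pose G (k : nat) s t := if (count id s == k) && (count id t == r - k)%N then X s t k else 0.
transitivity (wsum i (fun s => \sum_(k < r.+1) wsum j (G k s))).
  rewrite /zeval wsum_cat; apply: wsum_ext => s si; rewrite /wsum exchange_big /=.
  apply: eq_bigr => t _; rewrite /G (@sum_split_at _ _ _ _ (X s t)) /X count_cat.
  rewrite take_size_cat ?size_tuple //.
  by rewrite drop_size_cat ?size_tuple // mon_cat; case: eqP.
rewrite /wsum exchange_big; apply: eq_bigr => k _; rewrite mulr_suml.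
apply: eq_bigr => s _; rewrite mulr_sumr; apply: eq_bigr => t _.
by rewrite /G /X; case: eqP; case: eqP; rewrite /= ?mulr0 ?mul0r // mulrACA.
Qed.

End ZEval.

Lemma rmorph_zeval (R S : comPzRingType) (f : {rmorphism R -> S}) n cf r z :
  f (zeval n cf r z) = zeval n (fun s => f (cf s)) r (fun j => f (z j)).
Proof.
rewrite rmorph_sum; apply: eq_bigr => t _.
by case: eqP => _; rewrite ?rmorph0 // rmorphM rmorph_mon.
Qed.

Lemma ncmul_size i j (a b : ncpoly) t :
  (forall t, size t != i -> a t = 0) -> (forall t, size t != j -> b t = 0) ->
  size t != (i + j)%N -> ncmul i a b t = 0.
Proof.
move=> a0 b0 tij; rewrite /ncmul.
have [ti|ti] := eqVneq (size (take i t)) i; last by rewrite a0 ?mul0r.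
rewrite b0 ?mulr0 // size_drop; move: ti tij; rewrite size_take.
by case: ltnP => ? /eqP ? /eqP ?; apply/eqP; lia.
Qed.

Lemma lie_size n a : is_lie n a -> forall t, size t != n -> a t = 0.
Proof.
elim=> {n a} [t tn|t tn|i j a b _ a0 _ b0 t tij|//|n a b _ a0 _ b0 t tn
  |n c a _ a0 t tn|n a b _ a0 ab t tn].
- by rewrite /ncword; case: (t =P _) tn => [->|].
- by rewrite /ncword; case: (t =P _) tn => [->|].
- by rewrite (ncmul_size a0 b0) // (ncmul_size b0 a0) ?subrr // addnC.
- by rewrite a0 ?b0 ?addr0.
- by rewrite a0 ?mulr0.
- by rewrite -ab a0.
Qed.

Lemma lie0 n a : is_lie n a -> n = 0%N -> forall t, a t = 0.
Proof.
elim=> {n a} // [i j a b _ a0 _ b0 /eqP|n a b _ a0 _ b0 n0 t|n c a _ a0 n0 t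
  |n a b _ a0 ab n0 t].
- rewrite addn_eq0 => /andP[/eqP i0 /eqP j0] t.
  by rewrite /ncmul !a0 // !b0 // mul0r mulr0 subrr.
- by rewrite a0 ?b0 ?addr0.
- by rewrite a0 ?mulr0.
- by rewrite -ab a0.
Qed.

Lemma lie_rev n a : is_lie n a -> forall t, a (rev t) = (-1) ^+ n.-1 * a t.
Proof.
have word_rev b t : ncword [:: b] (rev t) = ncword [:: b] t.
  by rewrite /ncword -(inj_eq (can_inj (@revK _))) revK.
elim=> {n a} [t|t|i j a b la IHa lb IHb t|n t|n a b _ IHa _ IHb t|n c a _ IHa t
  |n a b _ IHa ab t].
- by rewrite word_rev mul1r.
- by rewrite word_rev mul1r.
- case: i la IHa => [|i] la IHa; first by rewrite /ncmul !(lie0 la) ?mul0r ?mulr0 ?subrr.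
  case: j lb IHb => [|j] lb IHb; first by rewrite /ncmul !(lie0 lb) ?mul0r ?mulr0 ?subrr.
  have [tij|tij] := eqVneq (size t) (i.+1 + j.+1)%N; last first.
    have sa := lie_size la; have sb := lie_size lb.
    rewrite !(ncmul_size sa sb) ?size_rev // !(ncmul_size sb sa) ?size_rev 1?addnC //.
    by rewrite subrr mulr0.
  rewrite /ncmul !take_rev !drop_rev tij.
  have -> : (i.+1 + j.+1 - i.+1 = j.+1)%N by lia.
  have -> : (i.+1 + j.+1 - j.+1 = i.+1)%N by lia.
  by rewrite !IHa !IHb addnS exprS exprD /=; ring.
- by rewrite mulr0.
- by rewrite IHa IHb mulrDr.
- by rewrite IHa mulrCA.
- by rewrite -!ab IHa.
Qed.

Lemma sum_mul_endpoints (R : comPzRingType) r (A B : nat -> R) a b :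
  \sum_(k < r.+1) (A k + (if k == 0%N :> nat then a else 0)) *
                  (B k + (if (r - k)%N == 0%N then b else 0))
  = \sum_(k < r.+1) A k * B k + a * B 0%N + A r * b + (if r == 0%N then a * b else 0).
Proof.
rewrite (eq_bigr (fun k : 'I_r.+1 => A k * B k
   + ((if k == 0%N :> nat then a * B k + (if (r - k)%N == 0%N then a * b else 0) else 0)
   + (if k == ord_max then A k * b else 0)))); last first.
  move=> k _; rewrite [k == ord_max](_ : _ = ((r - k)%N == 0%N)); last first.
    by rewrite subn_eq0 -val_eqE /= eqn_leq -ltnS ltn_ord.
  by case: (_ == 0%N); case: (_ == 0%N); ring.
rewrite !big_split /= -!big_mkcond (big_pred1_eq _ ord0) (big_pred1_eq _ ord_max) /= subn0.
by case: (r == 0%N); ring.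
Qed.

Section LieEval.
Variables (R : comPzRingType) (phi : {rmorphism rat -> R}).

Definition maz n (h : ncpoly) r z := zeval n (fun s => phi (h s)) r z.

Lemma eq_maz n h h' r z : (forall s, h s = h' s) -> maz n h r z = maz n h' r z.
Proof. by move=> hh'; apply: eq_zeval => s _; rewrite hh'. Qed.

Lemma maz_ext n h r z z' : (forall j, (j <= r)%N -> z j = z' j) ->
  maz n h r z = maz n h r z'.
Proof. exact: zeval_ext. Qed.

Lemma maz0 n r z : maz n (fun _ => 0) r z = 0.
Proof.
by rewrite /maz (eq_zeval (cf' := fun _ => 0)) ?zeval0 // => s _; rewrite rmorph0.
Qed.

Lemma mazD n h1 h2 r z : maz n (fun s => h1 s + h2 s) r z = maz n h1 r z + maz n h2 r z.
Proof. by rewrite /maz -zevalD; apply: eq_zeval => s _; rewrite rmorphD. Qed.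

Lemma mazB n h1 h2 r z : maz n (fun s => h1 s - h2 s) r z = maz n h1 r z - maz n h2 r z.
Proof. by rewrite /maz -zevalB; apply: eq_zeval => s _; rewrite rmorphB. Qed.

Lemma mazZ n c h r z : maz n (fun s => c * h s) r z = phi c * maz n h r z.
Proof. by rewrite /maz -zevalZ; apply: eq_zeval => s _; rewrite rmorphM. Qed.

Lemma maz_ncmul i j a b r z :
  maz (i + j) (ncmul i a b) r z
  = \sum_(k < r.+1) maz i a k z * maz j b (r - k)%N (fun l => z (k + l)%N).
Proof. by rewrite /maz -zeval_cat; apply: eq_zeval => s _; rewrite rmorphM. Qed.

Definition xcoef n (h : ncpoly) : R := if n == 1%N then phi (h [:: lx]) else 0.

(* z -> z + c is the substitution x -> x + c, which fixes brackets: only the letter x sees it. *)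
Lemma maz_lie_shift n h : is_lie n h -> forall r z c,
  maz n h r (fun j => z j + c) = maz n h r z + (if r == 0%N then c * xcoef n h else 0).
Proof.
elim=> {n h} [r z c|r z c|i j a b la IHa lb IHb r z c|n r z c|n a b _ IHa _ IHb r z c
  |n c0 a _ IHa r z c|n a b _ IHa ab r z c].
- rewrite /maz /zeval /xcoef !wsumS !wsum_nil /ncword /= rmorph1 rmorph0.
  by case: r => [|[|r]] /=; ring.
- rewrite /maz /zeval /xcoef !wsumS !wsum_nil /ncword /= rmorph1 rmorph0.
  by case: r => [|[|r]] /=; ring.
- rewrite !mazB !maz_ncmul addnC !maz_ncmul.
  under eq_bigr => k _ do rewrite IHa (IHb (r - k)%N (fun l => z (k + l)%N) c).
  under [X in _ - X]eq_bigr => k _ do rewrite IHb (IHa (r - k)%N (fun l => z (k + l)%N) c).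
  pose shifted n d k := maz n d (r - k)%N (fun l => z (k + l)%N).
  rewrite (@sum_mul_endpoints _ r (maz i a ^~ z) (shifted j b)).
  rewrite (@sum_mul_endpoints _ r (maz j b ^~ z) (shifted i a)) /shifted subn0.
  have shift0 k (d : ncpoly) : maz k d r (fun l => z (0 + l)%N) = maz k d r z.
    by apply: zeval_ext => l _; rewrite add0n.
  have -> : xcoef (j + i) (fun t => ncmul i a b t - ncmul j b a t) = 0.
    rewrite /xcoef; case: eqP => // ji.
    have [i0|j0] : i = 0%N \/ j = 0%N by lia.
      by rewrite /ncmul !(lie0 la i0) mul0r mulr0 subrr rmorph0.
    by rewrite /ncmul !(lie0 lb j0) mul0r mulr0 subrr rmorph0.
  by rewrite !shift0; case: (r == 0%N); ring.
- by rewrite !maz0 /xcoef rmorph0 !if_same mulr0 if_same addr0.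
- rewrite !mazD IHa IHb /xcoef rmorphD.
  by case: (r == 0%N); case: (n == 1%N); ring.
- rewrite !mazZ IHa /xcoef rmorphM.
  by case: (r == 0%N); case: (n == 1%N); ring.
- by rewrite -!(eq_maz _ _ _ ab) IHa /xcoef ab.
Qed.

End LieEval.

Section PartialSums.
Variable K : fieldType.
Implicit Type u : nat -> K.

Lemma zsum0 u : zsum u 0 = 0.
Proof. by rewrite /zsum big_ord0. Qed.

Lemma zsumS u j : zsum u j.+1 = zsum u j + u j.
Proof. by rewrite /zsum big_ord_recr. Qed.

Lemma eq_zsum u v j : (forall i, (i < j)%N -> u i = v i) -> zsum u j = zsum v j.
Proof. by move=> uv; apply: eq_bigr => i _; apply: uv. Qed.

Lemma zsum_rev u m j : (j <= m)%N ->
  zsum (fun i => u (m.-1 - i)%N) j = zsum u m - zsum u (m - j).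
Proof.
elim: j => [|j IH] jm; first by rewrite zsum0 subn0 subrr.
rewrite zsumS IH 1?ltnW // (_ : (m - j = (m - j.+1).+1)%N); last by lia.
by rewrite zsumS (_ : (m.-1 - j = m - j.+1)%N); [ring | lia].
Qed.

Definition pushed u k : nat -> K :=
  fun i => if i is i'.+1 then u i' else - \sum_(l < k.+1) u l.

Lemma zsum_rev_pushed u k j : (j <= k.+1)%N ->
  zsum (fun i => pushed u k (k - i)%N) j
  = zsum u k - zsum u (if j == k.+1 then k.+1 else (k - j)%N).
Proof.
move=> jk; have low i : (i <= k)%N ->
    zsum (fun i => pushed u k (k - i)%N) i = zsum u k - zsum u (k - i)%N.
  elim: i => [|i IH] ik; first by rewrite zsum0 subn0 subrr.
  rewrite zsumS IH 1?ltnW // /pushed (_ : (k - i = (k - i.+1).+1)%N); last by lia.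
  by rewrite zsumS; ring.
case: eqP => [->|jk1]; last by rewrite low //; lia.
by rewrite zsumS low // subnn zsum0 /pushed /zsum; ring.
Qed.

End PartialSums.

Definition part_xy (f : ncpoly) : ncpoly := fun u => part_y f u + part_x f u.

Lemma ma_maz (K : fieldType) (phi : {rmorphism rat -> K}) w h r u :
  ma w h r u = if r == 0%N then 0 else maz phi w h r (zsum u).
Proof.
rewrite /ma; case: eqP => // _; rewrite big_mkcond; apply: eq_bigr => t _ /=.
case: ifP => // _; rewrite fmorph_eq_rat -(mon_prod _ (size_tuple t)).
by congr (_ * _); apply: eq_bigl => i; rewrite (tnth_nth false).
Qed.

Section LieMould.
Variables (K : fieldType) (phi : {rmorphism rat -> K}) (w : nat) (f : ncpoly).
Hypotheses (w_gt2 : (2 < w)%N) (lie_f : is_lie w f).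

Let M := @ma K w f.

Lemma maz_shift r z c : maz phi w f r (fun j => z j + c) = maz phi w f r z.
Proof.
have w1 : (w == 1%N) = false by rewrite gtn_eqF // ltnW.
by rewrite maz_lie_shift // /xcoef w1 mulr0 if_same addr0.
Qed.

Lemma maz_depth0 z : maz phi w f 0%N z = 0.
Proof.
rewrite (@maz_ext _ _ _ _ _ _ (fun j => 0 + z 0%N)); last first.
  by move=> j; rewrite leqn0 add0r => /eqP ->.
rewrite maz_shift /maz /zeval /wsum big1 // => t _.
case: t => -[|[] s] //= sw; first by move: w_gt2; rewrite -(eqP sw).
by rewrite mul0r mulr0 if_same.
Qed.

Lemma ma_eq_maz r u : M r u = maz phi w f r (zsum u).
Proof. by rewrite /M (ma_maz phi); case: eqP => // ->; rewrite maz_depth0. Qed.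

Definition teruz r (z : nat -> K) :=
  maz phi w f r z + (z r - z r.-1)^-1 *
    (maz phi w f r.-1 (fun j => if j == r.-1 then z r else z j) - maz phi w f r.-1 z).

Lemma teruz_ext r z z' : (forall j, (j <= r)%N -> z j = z' j) -> teruz r z = teruz r z'.
Proof.
move=> zz'; have zz'1 j : (j <= r.-1)%N -> z j = z' j by move=> jr; apply: zz'; lia.
rewrite /teruz (maz_ext phi w f zz') (maz_ext phi w f zz'1) !zz' ?leq_pred //.
by congr (_ + _ * (_ - _)); apply: maz_ext => j jr; case: ifP => // _; apply: zz'; lia.
Qed.

Lemma teru_ma r u : (1 <= r)%N -> teru M r u = teruz r (zsum u).
Proof.
case: r => [|[|k]] // _; rewrite /teru /teruz /= !ma_eq_maz.
  by rewrite !maz_depth0 subrr mulr0 addr0.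
rewrite [zsum u k.+2]zsumS addrAC subrr add0r; congr (_ + _ * (_ - _)).
apply: maz_ext => j jk; have [->|jk'] := eqVneq j k.+1.
  by rewrite !zsumS (@eq_zsum _ _ u k) ?eqxx ?addrA // => i /ltn_eqF ->.
by apply: eq_zsum => i ij; rewrite ifN_eq //; apply/eqP => ik; move: jk jk'; lia.
Qed.

Lemma teruz_shift r z c : teruz r (fun j => z j + c) = teruz r z.
Proof.
rewrite /teruz !maz_shift [z r.-1 + c]addrC addrKA.
congr (_ + _ * (_ - _)); rewrite -(maz_shift _ (fun j => if j == r.-1 then z r else z j) c).
by apply: maz_ext => j _; case: ifP.
Qed.

Lemma teruz_oppz r z : (1 <= r <= w)%N ->
  teruz r (fun j => - z j) = (-1) ^+ (w - r) * teruz r z.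
Proof.
move=> /andP[r1 rw].
rewrite /teruz (@maz_ext _ phi w f r.-1 _ (fun j => - (if j == r.-1 then z r else z j))).
  rewrite /maz !zeval_oppz (_ : (w - r.-1 = (w - r).+1)%N); last by lia.
  by rewrite exprS -opprD invrN; ring.
by move=> j _; case: ifP.
Qed.

(* When z_r = 0 the difference quotient of teru deletes the last letter of f. *)
Lemma teruz_part_xy r y : (1 <= r <= w)%N -> y r = 0 -> y r.-1 != 0 ->
  teruz r y = maz phi w.-1 (part_xy f) r.-1 y.
Proof.
case: r => [|k] //= _ yr yk.
have [n wn] : exists n, w = n.+1 by exists w.-1; lia.
rewrite /teruz /maz wn /= zeval_rcons_y // yr zeval_rcons_x sub0r mulrA.
rewrite mulVf ?oppr_eq0 // mul1r -zevalD.
by apply: eq_zeval => s _; rewrite rmorphD.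
Qed.

Lemma mantar_ma m u : (1 <= m <= w)%N -> mantar M m u = M m u.
Proof.
move=> /andP[m1 mw]; rewrite /mantar !ma_eq_maz (_ : (m == 0%N) = false); last by lia.
rewrite (@maz_ext _ phi w f m _ (fun j => - zsum u (m - j)%N + zsum u m)); last first.
  by move=> j jm; rewrite zsum_rev //; ring.
rewrite maz_shift /maz zeval_oppz zeval_revz.
rewrite (@eq_zeval _ w _ (fun s => (-1) ^+ w.-1 * phi (f s))); last first.
  by move=> s _; rewrite (lie_rev lie_f) rmorphM rmorphXn rmorphN1.
rewrite zevalZ !mulrA -!exprD (_ : (m.-1 + (w - m) + w.-1 = (w.-1).*2)%N); last by lia.
by rewrite -muln2 exprM sqrr_sign mul1r.
Qed.

Lemma teru_mantar_ma m u : (1 <= m <= w)%N -> teru (mantar M) m u = teru M m u.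
Proof.
move=> /andP[m1 mw]; rewrite /teru; case: ifP => m_le1; first by rewrite mantar_ma ?m1.
by rewrite !mantar_ma //; apply/andP; split; lia.
Qed.

Lemma teru_ma_part_xy r u : (1 <= r <= w)%N -> u r.-1 != 0 ->
  teru M r u = maz phi w.-1 (part_xy f) r.-1 (fun j => zsum u j - zsum u r).
Proof.
move=> /[dup] rw /andP[r1 _] ur; rewrite teru_ma // -(teruz_shift r _ (- zsum u r)).
rewrite teruz_part_xy ?subrr //; case: r rw ur {r1} => [|k] //= _ uk.
by rewrite zsumS opprD addrA subrr sub0r oppr_eq0.
Qed.

Lemma senary_rhs r u : (1 <= r <= w)%N -> zsum u r != 0 ->
  push (mantar (teru (mantar M))) r u
  = (-1) ^+ w.-1 * maz phi w.-1 (anti (part_xy f)) r.-1 (fun j => zsum u j - zsum u r).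
Proof.
case: r => [|k] // rw uk; rewrite /push {1}/mantar /= teru_mantar_ma // teru_ma //.
pose sigma j := if j == k.+1 then k.+1 else (k - j)%N.
rewrite (@teruz_ext _ _ (fun j => - zsum u (sigma j) + zsum u k)); last first.
  by move=> j jk; rewrite zsum_rev_pushed //; ring.
rewrite teruz_shift teruz_oppz // -(teruz_shift _ (fun j => zsum u (sigma j)) (- zsum u k.+1)).
rewrite teruz_part_xy //= /sigma ?eqxx ?subrr //; last first.
  by rewrite ifN_eq ?subnn ?zsum0 ?sub0r ?oppr_eq0 // neq_ltn ltnSn.
set y := fun j => zsum u j - zsum u k.+1.
rewrite (@maz_ext _ phi w.-1 _ k _ (fun j => y (k - j)%N)) => [|j jk]; last first.
  by rewrite ifN_eq //; lia.
rewrite /maz (zeval_revz _ _ _ y) mulrA -exprD (_ : (k + (w - k.+1) = w.-1)%N) //; lia.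
Qed.

Lemma senary_at_iff r u : (1 <= r <= w)%N -> u r.-1 != 0 -> zsum u r != 0 ->
  teru M r u = push (mantar (teru (mantar M))) r u <->
  maz phi w.-1 (fun s => part_xy f s - (-1) ^+ w.-1 * anti (part_xy f) s) r.-1
    (fun j => zsum u j - zsum u r) = 0.
Proof.
move=> rw ur zr; rewrite teru_ma_part_xy // senary_rhs // mazB mazZ rmorphXn rmorphN1.
by split=> [->|/eqP]; rewrite ?subrr // subr_eq0 => /eqP.
Qed.

End LieMould.

Section GenericPoint.
Variable w : nat.

Definition genX i : {mpoly rat[w]} :=
  if (i < w)%N =P true is ReflectT H then 'X_(Ordinal H) else 0.

Definition genU i : 'X_{1..w} :=
  if (i < w)%N =P true is ReflectT H then U_(Ordinal H)%MM else 0%MM.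

Lemma generic_genX i : generic w i = FracField.tofrac (genX i).
Proof. by rewrite /generic /genX; case: (_ =P true) => //= _; rewrite rmorph0. Qed.

Lemma genX_U i : (i < w)%N -> genX i = 'X_[genU i].
Proof. by rewrite /genX /genU; case: (_ =P true). Qed.

Fixpoint mexp (j0 : nat) (s : seq bool) : 'X_{1..w} :=
  if s is b :: s' then (if b then mexp j0.+1 s' else genU j0 + mexp j0 s')%MM else 0%MM.

Lemma mon_genX s j0 : (j0 + count id s < w)%N ->
  mon (fun j => genX (j0 + j)%N) s = 'X_[mexp j0 s].
Proof.
elim: s j0 => [|[] s IH] j0 /= sw; first by rewrite mpolyX0.
  by rewrite -IH; [apply: mon_ext => j _; rewrite addSnnS | lia].
by rewrite IH ?mpolyXD ?addn0 ?genX_U //; lia.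
Qed.

Lemma mexp_low s j0 (i : 'I_w) : (i < j0)%N -> mexp j0 s i = 0%N.
Proof.
elim: s j0 => [|[] s IH] j0 /= ij0; first by rewrite mnm0E.
  by apply: IH; lia.
rewrite mnmDE IH // addn0 /genU; case: (_ =P true) => [j0w|_]; last by rewrite mnm0E.
by rewrite mnm1E; case: eqP => // ji; move: ij0; rewrite -ji ltnn.
Qed.

Lemma mexp_x_neq0 s j0 (j0w : (j0 < w)%N) : mexp j0 (false :: s) (Ordinal j0w) != 0%N.
Proof.
rewrite /= mnmDE /genU; case: (_ =P true) => [j0w'|//].
by rewrite mnm1E (_ : Ordinal j0w' = Ordinal j0w) ?eqxx //; apply: val_inj.
Qed.

Lemma mexp_inj s t j0 : size s = size t -> (j0 + count id s < w)%N ->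
  mexp j0 s = mexp j0 t -> s = t.
Proof.
elim: s t j0 => [|b s IH] [|c t] j0 //= [st] sw st_exp.
have j0w : (j0 < w)%N by lia.
case: b c sw st_exp => [] [] /= sw st_exp.
- by rewrite (IH t j0.+1) //; lia.
- by have := mexp_x_neq0 t j0w; rewrite /= -st_exp mexp_low.
- by have := mexp_x_neq0 s j0w; rewrite /= st_exp mexp_low.
- rewrite (IH t j0) //; apply/mnmP => i.
  by move/mnmP: st_exp => /(_ i); rewrite !mnmDE; lia.
Qed.

Lemma zeval_genX_eq0 n k (d : ncpoly) : (k < w)%N ->
  zeval n (fun s => (d s)%:MP) k genX = 0 ->
  forall s, size s = n -> count id s = k -> d s = 0.
Proof.
move=> kw d0 s0 s0n s0k; have := congr1 (mcoeff (mexp 0 s0)) d0.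
rewrite mcoeff0 => <-; rewrite (big_morph _ (mcoeffD _) (mcoeff0 _ _)).
rewrite -[LHS](wsum_delta (d s0) s0n).
apply: eq_bigr => t _; case: (count id t =P k) => [tk|tk]; last first.
  by rewrite mcoeff0; case: eqP => // ts; case: tk; rewrite ts.
rewrite mcoeffCM (@mon_ext _ t _ (fun j => genX (0 + j)%N)) // mon_genX ?add0n ?tk //.
rewrite mcoeffX; have [->|ts] := eqVneq (tval t) s0; first by rewrite !eqxx mulr1.
suff /negbTE-> : mexp 0 t != mexp 0 s0 by rewrite mulr0.
apply/eqP => /mexp_inj st; move/eqP: ts; apply; apply: st.
  by rewrite size_tuple s0n.
by rewrite add0n tk.
Qed.

(* At the generic point, z_j - z_(k+1) for j <= k are independent linear forms, and the
   substitution [unshift k] maps them back to the variables. *)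
Definition shifted_sums k j : {mpoly rat[w]} :=
  \sum_(i < j) genX i - \sum_(i < k.+1) genX i.

Definition unshift k : w.-tuple {mpoly rat[w]} :=
  let T j := if (j < k.+1)%N then genX j else 0 in [tuple T i.+1 - T i | i < w].

Lemma comp_unshift k j : (j <= k < w)%N ->
  comp_mpoly (unshift k) (shifted_sums k j) = genX j.
Proof.
move=> /andP[jk kw]; set T := fun j => if (j < k.+1)%N then genX j else 0.
have compX i : (i < w)%N -> comp_mpoly (unshift k) (genX i) = T i.+1 - T i.
  move=> iw; rewrite /genX; case: (_ =P true) => [iw'|]; last by rewrite iw.
  by rewrite comp_mpolyXU -(tnth_nth 0) tnth_mktuple.
rewrite rmorphB !rmorph_sum.
rewrite (eq_bigr (fun i : 'I_j => T i.+1 - T i)) => [|i _]; last first.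
  by apply: compX; have := ltn_ord i; lia.
rewrite [X in _ - X](eq_bigr (fun i : 'I_k.+1 => T i.+1 - T i)) => [|i _]; last first.
  by apply: compX; have := ltn_ord i; lia.
rewrite -!(big_mkord xpredT (fun i => T i.+1 - T i)) !telescope_sumr // /T ltnn ltnS jk.
by rewrite ltn0Sn; ring.
Qed.

Definition const_ratfun : {rmorphism rat -> ratfun w} :=
  (@FracField.tofrac {mpoly rat[w]}) \o (@mpolyC w rat).

Lemma maz_generic_eq0 n k d : (k < w)%N ->
  maz const_ratfun n d k (fun j => zsum (generic w) j - zsum (generic w) k.+1) = 0 ->
  forall s, size s = n -> count id s = k -> d s = 0.
Proof.
move=> kw d0; apply: zeval_genX_eq0 => //.
have shifted : zeval n (fun s => (d s)%:MP) k (shifted_sums k) = 0.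
  apply/eqP; rewrite -tofrac_eq0 -d0 rmorph_zeval; apply/eqP/zeval_ext => j _.
  rewrite rmorphB !rmorph_sum /zsum.
  by congr (_ - _); apply: eq_bigr => i _; rewrite generic_genX.
rewrite -(rmorph0 (comp_mpoly (unshift k))) -shifted rmorph_zeval.
rewrite (zeval_ext _ _ (z' := fun j => comp_mpoly (unshift k) (shifted_sums k j))).
  by apply: eq_zeval => s _; exact/esym/comp_mpolyC.
by move=> j jk; rewrite comp_unshift // jk.
Qed.

Lemma generic_neq0 i : (i < w)%N -> generic w i != 0.
Proof.
move=> iw; rewrite generic_genX tofrac_eq0 genX_U //.
apply/eqP => /(congr1 (mcoeff (genU i))).
by rewrite mcoeffX eqxx mcoeff0 => /eqP; rewrite oner_eq0.
Qed.

Lemma zsum_generic_neq0 r : (1 <= r <= w)%N -> zsum (generic w) r != 0.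
Proof.
move=> /andP[r1 rw]; have -> : zsum (generic w) r = FracField.tofrac (\sum_(i < r) genX i).
  by rewrite rmorph_sum; apply: eq_bigr => i _; rewrite generic_genX.
rewrite tofrac_eq0; apply/eqP => /(congr1 (meval (fun _ => 1))).
rewrite rmorph_sum rmorph0 (eq_bigr (fun _ => 1)) => [|i _]; last first.
  rewrite /genX; case: (_ =P true) => [?|[]]; first exact: mevalXU.
  by apply/idP; have := ltn_ord i; lia.
by rewrite sumr_const card_ord => /eqP; rewrite pnatr_eq0; lia.
Qed.

End GenericPoint.

Theorem lemma3p2 (w : nat) (f : ncpoly) :
  (2 < w)%N -> is_lie w f ->
  let g : ncpoly := fun u => part_y f u + part_x f u in
  (forall u : seq bool, g u = (-1) ^+ (w - 1) * anti g u) <->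
  (forall r : nat, (1 <= r <= w)%N ->
     teru (@ma (ratfun w) w f) r (generic w)
     = push (mantar (teru (mantar (@ma (ratfun w) w f)))) r (generic w)).
Proof.
move=> w_gt2 lie_f g; rewrite subn1.
have senary_iff r : (1 <= r <= w)%N ->
    teru (ma w f) r (generic w) = push (mantar (teru (mantar (ma w f)))) r (generic w) <->
    maz (const_ratfun w) w.-1 (fun s => g s - (-1) ^+ w.-1 * anti g s) r.-1
      (fun j => zsum (generic w) j - zsum (generic w) r) = 0.
  move=> rw; apply: senary_at_iff => //; last exact: zsum_generic_neq0.
  by apply: generic_neq0; case/andP: rw; lia.
split=> [anti_g r rw | senary u].
  apply/(senary_iff r rw); rewrite (eq_maz _ _ _ _ (h' := fun _ => 0)) ?maz0 // => s.
  by rewrite -anti_g subrr.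
have [uw|uw] := eqVneq (size u) w.-1; last first.
  have g0 v : size v != w.-1 -> g v = 0.
    by move=> vw; rewrite /g /part_y /part_x !(lie_size lie_f) ?addr0 // size_rcons; lia.
  by rewrite /anti !g0 ?mulr0 ?size_rev.
have ru : (1 <= (count id u).+1 <= w)%N by have := count_size id u; lia.
apply/subr0_eq.
by apply: (maz_generic_eq0 (k := count id u) _ (proj1 (senary_iff _ ru) (senary _ ru))); lia.
Qed.
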